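(* Let $f:\mathbb{R}^n\to\mathbb{R}$ be $\mathcal C^2$, $\mu$-strongly convex, with $L$-Lipschitz gradient ($0<\mu<L$) and $\eta$-Lipschitz Hessian, let $x_0\in\mathbb{R}^n$, $k\ge1$ an integer, $\rho=1-\frac{\mu}{L}$, and define for $C\ge1$ $$\hat\rho(C)=\tilde\rho(C)+3\frac{\eta}{L^2}\|\nabla f(x_0)\|k^2C^2.$$ Let $C_0=\frac{2+\rho^k}{2-\rho^k}$ and $a=\frac{\eta}{L^2}\|\nabla f(x_0)\|$. Then: (i) if $a<\frac{\rho^k(1-\rho^k)(2-\rho^k)}{3k^2(2+\rho^k)^2}$, there exists a nonempty interval $I$ containing $C_0$ such that $\hat\rho(C)<\rho^k$ for $C\in I$; (ii) if $a<\min\big(\frac{\rho^k(1-\rho^k)(2-\rho^k)}{3k^2(2+\rho^k)^2},\frac{\rho^k-\rho_1}{3k^2C_1^2}\big)$, then $\hat\rho(C)<\rho^k$ for $C\in[C_0,C_1]$; (iii) if $a<\min\big(\frac{\rho^k(1-\rho^k)(2-\rho^k)}{3k^2(2+\rho^k)^2},\frac{\rho^k-\rho_*}{3k^2C_*^2}\big)$, then $\hat\rho(C)<\rho^k$ for $C\in[C_0,C_*]$.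
   Context: $\mathbb{R}_k[X]$ denotes real polynomials of degree at most $k$; $\|p\|_1$ is the sum of absolute values of coefficients of $p$. $\tilde\rho(C)=\min\{\max_{x\in[0,\rho]}|p(x)|:p\in\mathbb{R}_k[X],\ p(1)=1,\ \|p\|_1\le C\}$. $T_k$ is the first-kind Chebyshev polynomial of degree $k$; $C_*=\|p_*\|_1$ with $p_*(X)=T_k(\frac{2X-\rho}{\rho})/|T_k(\frac{2-\rho}{\rho})|$; $\rho_*=\frac{2\beta^k}{1+\beta^{2k}}$ with $\beta=\frac{1-\sqrt{1-\rho}}{1+\sqrt{1-\rho}}$; $\beta_\rho=\frac{\sqrt{1+\rho}-\sqrt{1-\rho}}{\sqrt{1+\rho}+\sqrt{1-\rho}}$, $\rho_1=\frac{2\beta_\rho^k}{1+\beta_\rho^{2k}}$, $C_1=\frac{\rho_1}{2\rho^k}\big((1-\sqrt{1+\rho^2})^k+(1+\sqrt{1+\rho^2})^k\big)$. *)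

From HB Require Import structures.
From mathcomp Require Import all_boot all_order all_algebra.
From mathcomp Require Import all_classical all_reals all_analysis.
Set Implicit Arguments. Unset Strict Implicit. Unset Printing Implicit Defensive.
Import Order.TTheory GRing.Theory Num.Theory.
Import numFieldNormedType.Exports.
Local Open Scope classical_set_scope.
Local Open Scope ring_scope.

Section Defs.
Variable R : realType.

Definition dotv n (u v : 'rV[R]_n) : R := \sum_(i < n) u 0 i * v 0 i.
Definition enorm n (v : 'rV[R]_n) : R := Num.sqrt (\sum_(i < n) v 0 i ^+ 2).

Definition partial n (f : 'rV[R]_n -> R) (i : 'I_n) (x : 'rV[R]_n) : R :=
  'D_(delta_mx 0 i) f x.
Definition grad n (f : 'rV[R]_n -> R) (x : 'rV[R]_n) : 'rV[R]_n :=
  \row_i partial f i x.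
Definition hessian n (f : 'rV[R]_n -> R) (x : 'rV[R]_n) : 'M[R]_n :=
  \matrix_(i, j) partial (partial f j) i x.

Definition is_C2 n (f : 'rV[R]_n -> R) : Prop :=
  [/\ forall x, differentiable f x,
      forall j x, differentiable (partial f j) x &
      forall i j, continuous (partial (partial f j) i)].

Definition strongly_convex n (mu : R) (f : 'rV[R]_n -> R) : Prop :=
  forall x y, f x + dotv (grad f x) (y - x) + mu / 2 * enorm (y - x) ^+ 2 <= f y.

Definition lipschitz_grad n (L : R) (f : 'rV[R]_n -> R) : Prop :=
  forall x y, enorm (grad f x - grad f y) <= L * enorm (x - y).

(* operator-norm (Euclidean) Lipschitz bound on the Hessian, written out *)
Definition lipschitz_hessian n (eta : R) (f : 'rV[R]_n -> R) : Prop :=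
  forall x y v, enorm (v *m (hessian f x - hessian f y)) <= eta * enorm (x - y) * enorm v.

Definition norm1 (p : {poly R}) : R := \sum_(i < size p) `|p`_i|.

Definition supabs (rho : R) (p : {poly R}) : R :=
  sup [set y | exists2 x, 0 <= x <= rho & y = `|p.[x]|].

Definition rho_tilde (k : nat) (rho C : R) : R :=
  inf [set m | exists p : {poly R},
         [/\ (size p <= k.+1)%N, p.[1] = 1, norm1 p <= C & m = supabs rho p]].

Fixpoint cheb_pair (k : nat) : {poly R} * {poly R} :=
  match k with
  | 0%N => (1, 'X)
  | k'.+1 => let: (a, b) := cheb_pair k' in (b, 2%:P * 'X * b - a)
  end.
Definition cheb (k : nat) : {poly R} := (cheb_pair k).1.

Definition p_star (k : nat) (rho : R) : {poly R} :=
  `|(cheb k).[(2 - rho) / rho]|^-1 *: ((cheb k) \Po ((2 / rho) *: 'X - 1)).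
Definition C_star (k : nat) (rho : R) : R := norm1 (p_star k rho).

Definition beta_ (rho : R) : R :=
  (1 - Num.sqrt (1 - rho)) / (1 + Num.sqrt (1 - rho)).
Definition rho_star (k : nat) (rho : R) : R :=
  2 * beta_ rho ^+ k / (1 + beta_ rho ^+ (2 * k)).

Definition beta_rho (rho : R) : R :=
  (Num.sqrt (1 + rho) - Num.sqrt (1 - rho)) / (Num.sqrt (1 + rho) + Num.sqrt (1 - rho)).
Definition rho_1 (k : nat) (rho : R) : R :=
  2 * beta_rho rho ^+ k / (1 + beta_rho rho ^+ (2 * k)).
Definition C_1 (k : nat) (rho : R) : R :=
  rho_1 k rho / (2 * rho ^+ k) *
  ((1 - Num.sqrt (1 + rho ^+ 2)) ^+ k + (1 + Num.sqrt (1 + rho ^+ 2)) ^+ k).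

(* rho^(C) = rho~(C) + 3 a k^2 C^2 with a = eta/L^2 ||grad f(x0)|| *)
Definition rho_hat (k : nat) (rho a C : R) : R :=
  rho_tilde k rho C + 3 * a * (k%:R) ^+ 2 * C ^+ 2.

End Defs.

(* rho_tilde C is an infimum, so every polynomial p of degree <= k with p(1) = 1 and
   ||p||_1 <= C bounds it by max_[0,rho] |p|.  Such certificates are closed under convex
   combinations and C |-> 3 a k^2 C^2 is convex (a >= 0 because the Hessian is Lipschitz), so
   rho_hat < rho^k holds on a whole segment [A, B] as soon as it is certified strictly at A and
   at B.  The endpoints are certified by explicit polynomials: (X^k - rho^k/2) / (1 - rho^k/2)
   has ||.||_1 = C0 and maximum rho^k / (2 - rho^k) on [0, rho], and the first threshold on a is
   exactly strictness at C0; the rescaled Chebyshev polynomials T_k(X/rho) / T_k(1/rho) and p_*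
   are bounded by rho_1 and rho_* on [0, rho], with ||.||_1 <= C_1 and = C_*.  For (i),
   strictness at C0 persists on some [C0, C0 + e]. *)

From HB Require Import structures.
From mathcomp Require Import all_boot all_order all_algebra.
From mathcomp Require Import all_classical all_reals all_analysis.
From mathcomp Require Import ring lra zify.
Import Order.TTheory GRing.Theory Num.Theory.
Import numFieldNormedType.Exports.

Set Implicit Arguments.
Unset Strict Implicit.
Unset Printing Implicit Defensive.

Local Open Scope ring_scope.

Lemma nat_ind2 (P : nat -> Prop) :
  P 0%N -> P 1%N -> (forall n, P n -> P n.+1 -> P n.+2) -> forall n, P n.
Proof.
move=> P0 P1 PS n; suff [] : P n /\ P n.+1 by [].
by elim: n => [|n [Pn PSn]]; split=> //; apply: PS.
Qed.

Section Norm1.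
Variable R : realType.
Implicit Types (c : R) (p q : {poly R}).

Lemma norm1_widen p m : (size p <= m)%N -> norm1 p = \sum_(i < m) `|p`_i|.
Proof.
move=> hm; rewrite /norm1 (big_ord_widen _ (fun i => `|p`_i|) hm) big_mkcond /=.
apply: eq_bigr => i _; case: ifP => // /negbT; rewrite -leqNgt => hi.
by rewrite nth_default // normr0.
Qed.

Lemma norm1D p q : norm1 (p + q) <= norm1 p + norm1 q.
Proof.
set m := maxn (size p) (size q).
rewrite (norm1_widen (size_polyD p q)) (@norm1_widen p m) ?leq_maxl //.
rewrite (@norm1_widen q m) ?leq_maxr // -big_split /=.
by apply: ler_sum => i _; rewrite coefD ler_normD.
Qed.

Lemma norm1Z c p : norm1 (c *: p) = `|c| * norm1 p.
Proof.
rewrite (norm1_widen (size_scale_leq c p)) /norm1 mulr_sumr.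
by apply: eq_bigr => i _; rewrite coefZ normrM.
Qed.

Lemma norm1B p q : norm1 (p - q) <= norm1 p + norm1 q.
Proof.
have -> : norm1 q = norm1 (- q) by rewrite -scaleN1r norm1Z normrN1 mul1r.
exact: norm1D.
Qed.

Lemma norm1MX p : norm1 ('X * p) = norm1 p.
Proof.
have hs : (size ('X * p)%R <= (size p).+1)%N.
  by apply: leq_trans (size_polyMleq _ _) _; rewrite size_polyX.
rewrite (norm1_widen hs) big_ord_recl /= coefXM eqxx normr0 add0r.
by apply: eq_bigr => i _; rewrite coefXM.
Qed.

Lemma norm1C c : norm1 c%:P = `|c|.
Proof. by rewrite (norm1_widen (size_polyC_leq1 c)) big_ord1 coefC. Qed.

Lemma norm1Xn k : norm1 ('X^k : {poly R}) = 1.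
Proof.
elim: k => [|k IH]; first by rewrite expr0 -polyC1 norm1C normr1.
by rewrite exprS norm1MX.
Qed.

End Norm1.

Section Chebyshev.
Variable R : realType.
Implicit Types (k : nat) (r w v y : R).

Local Notation T := (cheb R).

Lemma cheb0 : T 0 = 1. Proof. by []. Qed.

Lemma cheb1 : T 1 = 'X. Proof. by []. Qed.

Lemma chebSS k : T k.+2 = 2%:P * 'X * T k.+1 - T k.
Proof. by rewrite /cheb /=; case: (cheb_pair R k). Qed.

Lemma horner_chebSS k y : (T k.+2).[y] = 2 * y * (T k.+1).[y] - (T k).[y].
Proof. by rewrite chebSS !hornerE. Qed.

Lemma size_cheb k : (size (T k) <= k.+1)%N.
Proof.
elim/nat_ind2: k => [| |k /= IH1 IH2]; first by rewrite cheb0 size_polyC oner_neq0.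
  by rewrite cheb1 size_polyX.
rewrite chebSS; apply: leq_trans (size_polyD _ _) _.
rewrite size_polyN geq_max -mulrA mul_polyC; apply/andP; split.
  apply: leq_trans (size_scale_leq _ _) _; apply: leq_trans (size_polyMleq _ _) _.
  by rewrite size_polyX.
by apply: (leq_trans IH1); lia.
Qed.

Lemma horner_cheb_exp k y w v : w * v = 1 -> w + v = 2 * y ->
  (T k).[y] = (w ^+ k + v ^+ k) / 2.
Proof.
move=> wv1 wv2; elim/nat_ind2: k => [| |k /= IH1 IH2].
- by rewrite cheb0 hornerC; field.
- by rewrite cheb1 hornerX wv2; field.
rewrite horner_chebSS IH1 IH2 -wv2 !exprS.
have -> : w ^+ k + v ^+ k = w * v * (w ^+ k + v ^+ k) by rewrite wv1 mul1r.
ring.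
Qed.

Lemma horner_cheb_invariant k y :
  (T k.+1).[y] ^+ 2 - 2 * y * (T k.+1).[y] * (T k).[y] + (T k).[y] ^+ 2 = 1 - y ^+ 2.
Proof.
elim: k => [|k IH]; first by rewrite cheb0 cheb1 hornerC hornerX; ring.
by rewrite horner_chebSS -IH; ring.
Qed.

Lemma normr_horner_cheb_le1 k y : -1 <= y <= 1 -> `|(T k).[y]| <= 1.
Proof.
move=> y11; have : y ^+ 2 <= 1 by nra.
rewrite le_eqVlt => /orP[/eqP y2|y2].
  have yy : y + y = 2 * y by ring.
  rewrite (horner_cheb_exp k (y2 : y * y = 1) yy).
  have -> : (y ^+ k + y ^+ k) / 2 = y ^+ k by field.
  by rewrite normrX exprn_ile1 ?ler_norml.
case: k => [|k]; first by rewrite cheb0 hornerC normr1.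
have := horner_cheb_invariant k y.
set t := (T k.+1).[y]; set u := (T k).[y] => inv.
have sq : (1 - y ^+ 2) * (1 - t ^+ 2) =
    (u - y * t) ^+ 2 + ((1 - y ^+ 2) - (t ^+ 2 - 2 * y * t * u + u ^+ 2)) by ring.
rewrite inv subrr addr0 in sq.
have : 0 <= (1 - y ^+ 2) * (1 - t ^+ 2) by rewrite sq sqr_ge0.
rewrite pmulr_rge0 ?subr_gt0 // subr_ge0 => t2.
by rewrite -sqrtr_sqr -sqrtr1 ler_sqrt.
Qed.

Lemma horner_cheb_gt0 k y w : 0 < w -> w + w^-1 = 2 * y -> 0 < (T k).[y].
Proof.
move=> w0 hw; rewrite (horner_cheb_exp k (mulfV (lt0r_neq0 w0)) hw).
by rewrite divr_gt0 // addr_gt0 // exprn_gt0 // invr_gt0.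
Qed.

Lemma horner_chebV k y w : 0 < w -> w + w^-1 = 2 * y ->
  2 * w ^+ k / (1 + w ^+ (2 * k)) = (T k).[y]^-1.
Proof.
move=> w0 hw; rewrite (horner_cheb_exp k (mulfV (lt0r_neq0 w0)) hw) exprVn mulnC exprM.
have wk : w ^+ k != 0 by rewrite expf_neq0 ?gt_eqF.
have wk2 : w ^+ k * w ^+ k + 1 != 0.
  by apply: lt0r_neq0; rewrite -expr2; have := sqr_ge0 (w ^+ k); lra.
by field; rewrite wk wk2.
Qed.

(* (w1^k + w2^k)/2 solves u_(k+2) = 2 r u_(k+1) + u_k, the recurrence that the triangle
   inequality gives for the coefficients of T_(k+2)(rX) = 2 rX T_(k+1)(rX) - T_k(rX). *)
Lemma norm1_cheb_comp_scale k r w1 w2 : 0 <= r -> w1 + w2 = 2 * r ->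
  w1 ^+ 2 = 2 * r * w1 + 1 -> w2 ^+ 2 = 2 * r * w2 + 1 ->
  norm1 (T k \Po (r *: 'X)) <= (w1 ^+ k + w2 ^+ k) / 2.
Proof.
move=> r0 hs e1 e2; elim/nat_ind2: k => [| |k /= IH1 IH2].
- by rewrite cheb0 comp_polyC norm1C normr1; lra.
- rewrite cheb1 comp_polyX norm1Z -['X]expr1 norm1Xn mulr1 ger0_norm // !expr1 hs.
  lra.
rewrite chebSS comp_polyB comp_polyM comp_polyM comp_polyC comp_polyX.
apply: le_trans (norm1B _ _) _.
have -> : 2%:P * (r *: 'X) * (T k.+1 \Po (r *: 'X)) = (2 * r) *: ('X * (T k.+1 \Po (r *: 'X))).
  by rewrite mul_polyC scalerA -scalerAl.
rewrite norm1Z norm1MX ger0_norm ?mulr_ge0 //.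
have -> : w1 ^+ k.+2 = 2 * r * w1 ^+ k.+1 + w1 ^+ k by rewrite -addn2 exprD e1 exprS; ring.
have -> : w2 ^+ k.+2 = 2 * r * w2 ^+ k.+1 + w2 ^+ k by rewrite -addn2 exprD e2 exprS; ring.
have := ler_wpM2l (mulr_ge0 (ler0n _ 2) r0) IH2; lra.
Qed.

End Chebyshev.

Section Certificates.
Variable R : realType.
Implicit Types (k : nat) (rho a A B C M N l : R) (p q : {poly R}).

Definition certificate k rho C M p :=
  [/\ (size p <= k.+1)%N, p.[1] = 1, norm1 p <= C &
      forall x, 0 <= x <= rho -> `|p.[x]| <= M].

Lemma supabs_ge0 rho p : 0 <= rho -> 0 <= supabs rho p.
Proof.
move=> rho0; rewrite /supabs; set E := (X in sup X).
have E0 : E `|p.[0]| by exists 0; rewrite ?lexx.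
have [Eub|Enub] := pselect (has_ubound E).
  exact: le_trans (normr_ge0 _) (ub_le_sup Eub E0).
by rewrite sup_out // => -[].
Qed.

Lemma supabs_le rho p M : 0 <= rho ->
  (forall x, 0 <= x <= rho -> `|p.[x]| <= M) -> supabs rho p <= M.
Proof.
move=> rho0 pM; apply: ge_sup; first by exists `|p.[0]|, 0; rewrite ?lexx.
by move=> _ [x x0rho ->]; apply: pM.
Qed.

Lemma rho_tilde_le k rho C M p : 0 <= rho ->
  certificate k rho C M p -> rho_tilde k rho C <= M.
Proof.
move=> rho0 [sp p1 pC pM]; apply: le_trans (supabs_le rho0 pM).
apply: ge_inf; last by exists p.
by exists 0 => _ [q [_ _ _ ->]]; apply: supabs_ge0.
Qed.

Lemma certificateW k rho C C' M p :
  C <= C' -> certificate k rho C M p -> certificate k rho C' M p.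
Proof. by move=> CC' [sp p1 pC pM]; split=> //; apply: le_trans CC'. Qed.

Lemma certificate_convex k rho A B M N l p q : 0 <= l <= 1 ->
  certificate k rho A M p -> certificate k rho B N q ->
  certificate k rho (l * A + (1 - l) * B) (l * M + (1 - l) * N)
    (l *: p + (1 - l) *: q).
Proof.
move=> /andP[l0 l1] [sp p1 pA pM] [sq q1 qB qN].
have l'0 : 0 <= 1 - l by rewrite subr_ge0.
split.
- apply: leq_trans (size_polyD _ _) _; rewrite geq_max.
  by rewrite !(leq_trans (size_scale_leq _ _)).
- by rewrite !hornerE p1 q1; ring.
- apply: le_trans (norm1D _ _) _; rewrite !norm1Z (ger0_norm l0) (ger0_norm l'0).
  by apply: lerD; apply: ler_wpM2l.
- move=> x x0rho; rewrite !hornerE; apply: le_trans (ler_normD _ _) _.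
  rewrite !normrM (ger0_norm l0) (ger0_norm l'0).
  by apply: lerD; apply: ler_wpM2l => //; [apply: pM | apply: qN].
Qed.

Lemma segment_convex_comb A B C : A <= C <= B ->
  exists2 l, 0 <= l <= 1 & C = l * A + (1 - l) * B.
Proof.
move=> /andP[AC CB]; have [AB|BA] := ltP A B; last first.
  exists 1; first by rewrite ler01 lexx.
  by rewrite subrr mul0r addr0 mul1r; apply/le_anti; rewrite (le_trans CB BA).
exists ((B - C) / (B - A)); last by field; rewrite subr_eq0 gt_eqF.
by rewrite divr_ge0 ?ler_pdivrMr ?subr_ge0 ?subr_gt0 ?mul1r ?lerD2l ?lerN2 //= ltW.
Qed.

Lemma convex_comb_lt l x y z : 0 <= l <= 1 -> x < z -> y < z ->
  l * x + (1 - l) * y < z.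
Proof.
move=> /andP[l0 l1] xz yz.
apply: (@le_lt_trans _ _ (Num.max x y)); last by rewrite gt_max xz.
have mx : x <= Num.max x y by rewrite le_max lexx.
have my : y <= Num.max x y by rewrite le_max lexx orbT.
nra.
Qed.

Lemma rho_hat_lt_segment k rho a P A B M N p q : 0 <= rho -> 0 <= a ->
  certificate k rho A M p -> certificate k rho B N q ->
  M + 3 * a * k%:R ^+ 2 * A ^+ 2 < P -> N + 3 * a * k%:R ^+ 2 * B ^+ 2 < P ->
  forall C, A <= C <= B -> rho_hat k rho a C < P.
Proof.
move=> rho0 a0 cp cq MP NP C /segment_convex_comb[l l01 ->].
have rt := rho_tilde_le rho0 (certificate_convex l01 cp cq).
have comb_lt := convex_comb_lt l01 MP NP.
case/andP: l01 => l0 l1; rewrite /rho_hat; set K := 3 * a * k%:R ^+ 2 in comb_lt *.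
have K0 : 0 <= K by rewrite !mulr_ge0 // sqr_ge0.
have sq_convex : K * (l * A + (1 - l) * B) ^+ 2 <= l * (K * A ^+ 2) + (1 - l) * (K * B ^+ 2).
  rewrite -subr_ge0.
  have -> : l * (K * A ^+ 2) + (1 - l) * (K * B ^+ 2) - K * (l * A + (1 - l) * B) ^+ 2 =
      K * (l * (1 - l)) * (A - B) ^+ 2 by ring.
  by rewrite mulr_ge0 ?sqr_ge0 ?mulr_ge0 ?subr_ge0.
lra.
Qed.

End Certificates.

Section Witnesses.
Variable R : realType.
Implicit Types (k : nat) (rho : R).

Local Notation T := (cheb R).

Lemma certificate_shifted_monomial k rho : 0 <= rho -> rho ^+ k < 2 ->
  certificate k rho ((2 + rho ^+ k) / (2 - rho ^+ k)) (rho ^+ k / (2 - rho ^+ k))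
    ((1 - rho ^+ k / 2)^-1 *: ('X^k - (rho ^+ k / 2)%:P)).
Proof.
move=> rho0 P2; set P := rho ^+ k; set t := P / 2.
have P0 : 0 <= P by rewrite exprn_ge0.
have t0 : 0 <= t by rewrite divr_ge0.
have t1 : 0 < 1 - t by rewrite subr_gt0 ltr_pdivrMr // mul1r.
have P2' : 2 - P != 0 by rewrite subr_eq0 gt_eqF.
have c0 : 0 <= (1 - t)^-1 by rewrite invr_ge0 ltW.
split.
- apply: leq_trans (size_scale_leq _ _) _; apply: leq_trans (size_polyD _ _) _.
  by rewrite size_polyN size_polyXn geq_max leqnn (leq_trans (size_polyC_leq1 _)).
- by rewrite !hornerE expr1n mulVf ?lt0r_neq0.
- rewrite norm1Z; apply: le_trans (ler_wpM2l (normr_ge0 _) (norm1B _ _)) _.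
  rewrite norm1Xn norm1C !ger0_norm // [leLHS](_ : _ = (2 + P) / (2 - P)) //.
  by rewrite /t; field; rewrite P2'.
- move=> x /andP[x0 xrho].
  have xk0 : 0 <= x ^+ k by rewrite exprn_ge0.
  have xkP : x ^+ k <= P by rewrite lerXn2r.
  have xkt : `|x ^+ k - t| <= t by rewrite ler_norml /t; apply/andP; split; lra.
  rewrite !hornerE normrM ger0_norm //; apply: le_trans (ler_wpM2l c0 xkt) _.
  by rewrite [leLHS](_ : _ = P / (2 - P)) // /t; field; rewrite P2'.
Qed.

Lemma certificate_cheb_comp k rho (s : {poly R}) : (size s <= 2)%N ->
  (forall x, 0 <= x <= rho -> -1 <= s.[x] <= 1) -> 0 < (T k).[s.[1]] ->
  certificate k rho (norm1 ((T k).[s.[1]]^-1 *: (T k \Po s))) ((T k).[s.[1]]^-1)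
    ((T k).[s.[1]]^-1 *: (T k \Po s)).
Proof.
move=> s2 s11 T0; set c := (T k).[s.[1]]^-1.
have c0 : 0 < c by rewrite invr_gt0.
split=> //.
- apply: leq_trans (size_scale_leq _ _) _; apply: leq_trans (size_comp_poly_leq _ _) _.
  have := size_cheb R k; move: (size (T k)) (size s) s2 => m n; nia.
- by rewrite hornerZ horner_comp mulVf ?lt0r_neq0.
- move=> x x0rho; rewrite hornerZ horner_comp normrM gtr0_norm //.
  by rewrite -[leRHS]mulr1 ler_pM2l // normr_horner_cheb_le1 ?s11.
Qed.

Lemma beta_gt0 rho : 0 < rho < 1 -> 0 < beta_ rho.
Proof.
move=> /andP[rho0 rho1].
have s1 : Num.sqrt (1 - rho) < 1 by rewrite -[ltRHS]sqrtr1 ltr_sqrt; lra.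
by rewrite /beta_ divr_gt0 // ?subr_gt0 // ltr_wpDr ?sqrtr_ge0.
Qed.

Lemma beta_addV rho : 0 < rho < 1 -> beta_ rho + (beta_ rho)^-1 = 2 * ((2 - rho) / rho).
Proof.
move=> /andP[rho0 rho1]; rewrite /beta_ invf_div; set s := Num.sqrt (1 - rho).
have s2 : s ^+ 2 = 1 - rho by rewrite sqr_sqrtr // subr_ge0 ltW.
have s1 : s < 1 by rewrite -[ltRHS]sqrtr1 ltr_sqrt; lra.
have s0 : 0 <= s by rewrite sqrtr_ge0.
have rho_s : rho = 1 - s ^+ 2 by rewrite s2; ring.
rewrite rho_s; field.
by rewrite -rho_s lt0r_neq0 // lt0r_neq0 ?subr_gt0 // lt0r_neq0 // ltr_wpDr.
Qed.

Lemma beta_rho_gt0 rho : 0 < rho < 1 -> 0 < beta_rho rho.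
Proof.
move=> /andP[rho0 rho1].
have vu : Num.sqrt (1 - rho) < Num.sqrt (1 + rho) by rewrite ltr_sqrt; lra.
by rewrite /beta_rho divr_gt0 ?subr_gt0 // ltr_wpDr ?sqrtr_ge0 // sqrtr_gt0; lra.
Qed.

Lemma beta_rho_addV rho : 0 < rho < 1 -> beta_rho rho + (beta_rho rho)^-1 = 2 * rho^-1.
Proof.
move=> /andP[rho0 rho1]; rewrite /beta_rho invf_div.
set u := Num.sqrt (1 + rho); set v := Num.sqrt (1 - rho).
have u2 : u ^+ 2 = 1 + rho by rewrite sqr_sqrtr //; lra.
have v2 : v ^+ 2 = 1 - rho by rewrite sqr_sqrtr //; lra.
have vu : v < u by rewrite ltr_sqrt; lra.
have v0 : 0 <= v by rewrite sqrtr_ge0.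
have -> : (u - v) / (u + v) + (u + v) / (u - v) = 2 * (u ^+ 2 + v ^+ 2) / (u ^+ 2 - v ^+ 2).
  by field; rewrite !lt0r_neq0 ?subr_gt0 //; lra.
by rewrite u2 v2; field; rewrite !lt0r_neq0 //; lra.
Qed.

Lemma certificate_p_star k rho : 0 < rho < 1 ->
  certificate k rho (C_star k rho) (rho_star k rho) (p_star k rho).
Proof.
move=> rho01; case/andP: (rho01) => rho0 _.
set s : {poly R} := (2 / rho) *: 'X - 1.
have s1 : s.[1] = (2 - rho) / rho by rewrite !hornerE; field; rewrite lt0r_neq0.
have T0 := horner_cheb_gt0 k (beta_gt0 rho01) (beta_addV rho01).
rewrite /C_star.
have -> : p_star k rho = (T k).[s.[1]]^-1 *: (T k \Po s) by rewrite /p_star s1 gtr0_norm.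
rewrite /rho_star (horner_chebV k (beta_gt0 rho01) (beta_addV rho01)) -s1.
apply: certificate_cheb_comp; rewrite ?s1 //.
- apply: leq_trans (size_polyD _ _) _; rewrite size_polyN size_polyC geq_max.
  by rewrite (leq_trans (size_scale_leq _ _)) ?size_polyX //; case: (_ != _).
- move=> x /andP[x0 xrho]; rewrite !hornerE.
  have rho2 : 0 <= 2 / rho by rewrite divr_ge0 // ltW.
  have : 2 / rho * x <= 2 by rewrite -[leRHS](divfK (lt0r_neq0 rho0)) ler_wpM2l.
  have := mulr_ge0 rho2 x0; lra.
Qed.

Lemma certificate_rho_1 k rho : 0 < rho < 1 ->
  certificate k rho (C_1 k rho) (rho_1 k rho) (rho_1 k rho *: (T k \Po (rho^-1 *: 'X))).
Proof.
move=> rho01; case/andP: (rho01) => rho0 _.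
set s : {poly R} := rho^-1 *: 'X.
have s1 : s.[1] = rho^-1 by rewrite !hornerE ?mulr1.
have T0 := horner_cheb_gt0 k (beta_rho_gt0 rho01) (beta_rho_addV rho01).
have rho1E : rho_1 k rho = (T k).[rho^-1]^-1.
  by rewrite -(horner_chebV k (beta_rho_gt0 rho01) (beta_rho_addV rho01)).
rewrite rho1E -s1; apply: certificateW (certificate_cheb_comp _ _ _); rewrite ?s1 //;
  last 2 first.
- by rewrite (leq_trans (size_scale_leq _ _)) ?size_polyX.
- move=> x /andP[x0 xrho]; rewrite !hornerE.
  have rhoV : 0 <= rho^-1 by rewrite invr_ge0 ltW.
  have : rho^-1 * x <= 1 by rewrite -(mulVf (lt0r_neq0 rho0)) ler_wpM2l.
  have := mulr_ge0 rhoV x0; lra.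
set r := Num.sqrt (1 + rho ^+ 2).
have r2 : r ^+ 2 = 1 + rho ^+ 2 by rewrite sqr_sqrtr // addr_ge0 // sqr_ge0.
have rho0' : rho != 0 by rewrite lt0r_neq0.
have rhoV : 0 <= rho^-1 by rewrite invr_ge0 ltW.
have root e : e ^+ 2 = 1 + rho ^+ 2 -> ((1 + e) / rho) ^+ 2 = 2 * rho^-1 * ((1 + e) / rho) + 1.
  move=> e2; have -> : ((1 + e) / rho) ^+ 2 = (1 + 2 * e + e ^+ 2) / rho ^+ 2 by field.
  by rewrite e2; field.
have sum_roots : (1 + r) / rho + (1 - r) / rho = 2 * rho^-1 by field.
have := norm1_cheb_comp_scale k rhoV sum_roots (root _ r2) (root (- r) _).
rewrite sqrrN => /(_ r2) bound.
have rho1_ge0 : 0 <= rho_1 k rho by rewrite rho1E invr_ge0 ltW.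
rewrite norm1Z gtr0_norm ?invr_gt0 // -rho1E; apply: le_trans (ler_wpM2l rho1_ge0 bound) _.
rewrite /C_1 -/r [leLHS](_ : _ = rho_1 k rho / (2 * rho ^+ k) * ((1 - r) ^+ k + (1 + r) ^+ k)) //.
by rewrite !expr_div_n; field; rewrite expf_neq0.
Qed.

End Witnesses.

Lemma lipschitz_hessian_enorm_ge0 (R : realType) n (f : 'rV[R]_n -> R) eta (v : 'rV[R]_n) :
  lipschitz_hessian eta f -> 0 <= eta * enorm v.
Proof.
move=> hessL; have := hessL v 0 v; rewrite subr0 => bound.
have sq_ge0 : 0 <= eta * enorm v * enorm v := le_trans (sqrtr_ge0 _) bound.
have [->|vn0] := eqVneq (enorm v) 0; first by rewrite mulr0.
by move: sq_ge0; rewrite pmulr_lge0 // lt_neqAle eq_sym vn0 sqrtr_ge0.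
Qed.

Section Thresholds.
Variable R : realType.
Implicit Types a c m B K M P : R.

Lemma add_margin_lt a c B M P : 0 <= a -> 0 <= c ->
  a < (P - M) / (3 * c * B ^+ 2) -> M + 3 * a * c * B ^+ 2 < P.
Proof.
move=> a0 c0; have D0 : 0 <= 3 * c * B ^+ 2 by rewrite mulr_ge0 ?sqr_ge0 ?mulr_ge0.
have [->|Dn0] := eqVneq (3 * c * B ^+ 2) 0; first by rewrite invr0 mulr0 ltNge a0.
rewrite ltr_pdivlMr ?lt_neqAle 1?eq_sym ?Dn0 // => aD; lra.
Qed.

Lemma shifted_monomial_threshold c P : c != 0 -> 0 <= P < 1 ->
  P * (1 - P) * (2 - P) / (3 * c * (2 + P) ^+ 2) =
  (P - P / (2 - P)) / (3 * c * ((2 + P) / (2 - P)) ^+ 2).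
Proof.
move=> cn0 /andP[P0 P1]; have P2 : 2 - P != 0 by apply: lt0r_neq0; lra.
by field; rewrite cn0 P2 lt0r_neq0 //; lra.
Qed.

Lemma exists_right_margin m K c P : 0 <= K -> m + K * c ^+ 2 < P ->
  exists2 e, 0 < e & m + K * (c + e) ^+ 2 < P.
Proof.
move=> K0 lt_c; set d := P - (m + K * c ^+ 2); set D := K * (2 * `|c| + 1) + 1.
have d0 : 0 < d by rewrite subr_gt0.
have D1 : 1 <= D by rewrite lerDr mulr_ge0 // addr_ge0.
(* e := d / (D + d) satisfies e < 1 and e D < d, which bounds the increase K e (2 c + e). *)
have Dd : 0 < D + d by lra.
exists (d / (D + d)); first by rewrite divr_gt0.
set e := d / (D + d); have e0 : 0 < e by rewrite divr_gt0.
have e1 : e <= 1 by rewrite ler_pdivrMr // mul1r; lra.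
have eD : e * D < d by rewrite mulrAC ltr_pdivrMr // ltr_pM2l //; lra.
have : K * e * (2 * c + e) <= K * e * (2 * `|c| + 1).
  apply: ler_wpM2l; first by rewrite mulr_ge0 // ltW.
  by have := ler_norm c; lra.
rewrite /D /d in eD *; lra.
Qed.

End Thresholds.

Theorem proposition8 (R : realType) (n : nat) (f : 'rV[R]_n -> R)
  (mu L eta : R) (x0 : 'rV[R]_n) (k : nat) :
  is_C2 f -> 0 < mu -> mu < L ->
  strongly_convex mu f -> lipschitz_grad L f -> lipschitz_hessian eta f ->
  (1 <= k)%N ->
  let rho := 1 - mu / L in
  let a := eta / L ^+ 2 * enorm (grad f x0) in
  let C0 := (2 + rho ^+ k) / (2 - rho ^+ k) in
  let b1 := rho ^+ k * (1 - rho ^+ k) * (2 - rho ^+ k)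
            / (3 * (k%:R) ^+ 2 * (2 + rho ^+ k) ^+ 2) in
  [/\ a < b1 ->
        exists lo hi : R, [/\ 1 <= lo, lo < hi, lo <= C0 <= hi &
          forall C, lo <= C <= hi -> rho_hat k rho a C < rho ^+ k],
      a < Num.min b1 ((rho ^+ k - rho_1 k rho) / (3 * (k%:R) ^+ 2 * C_1 k rho ^+ 2)) ->
        forall C, C0 <= C <= C_1 k rho -> rho_hat k rho a C < rho ^+ k &
      a < Num.min b1 ((rho ^+ k - rho_star k rho) / (3 * (k%:R) ^+ 2 * C_star k rho ^+ 2)) ->
        forall C, C0 <= C <= C_star k rho -> rho_hat k rho a C < rho ^+ k].
Proof.
move=> _ mu0 muL _ _ hessL k1 rho a C0 b1.
have rho01 : 0 < rho < 1.
  have L0 : 0 < L := lt_trans mu0 muL.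
  by rewrite subr_gt0 ltr_pdivrMr // mul1r muL ltrBlDr ltrDl divr_gt0.
have /andP[rho0 rho1] := rho01; have rho0' := ltW rho0.
have Pk01 : 0 <= rho ^+ k < 1 by rewrite exprn_ge0 // exprn_ilt1 // -lt0n.
have /andP[Pk0 Pk1] := Pk01.
have a0 : 0 <= a.
  by rewrite /a mulrAC divr_ge0 ?sqr_ge0 // (lipschitz_hessian_enorm_ge0 _ hessL).
have kk0 : 0 <= k%:R ^+ 2 :> R by rewrite sqr_ge0.
have Pk2 : rho ^+ k < 2 by lra.
have cert0 := certificate_shifted_monomial rho0' Pk2.
have margin0 : a < b1 -> rho ^+ k / (2 - rho ^+ k) + 3 * a * k%:R ^+ 2 * C0 ^+ 2 < rho ^+ k.
  rewrite /b1 shifted_monomial_threshold ?sqrf_eq0 ?pnatr_eq0 -?lt0n //.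
  exact: add_margin_lt a0 kk0.
split.
- move=> /margin0 lt0; have K0 : 0 <= 3 * a * k%:R ^+ 2 by rewrite mulr_ge0 // mulr_ge0.
  have [e e0 lte] := exists_right_margin K0 lt0.
  have C0_ge1 : 1 <= C0 by rewrite /C0 ler_pdivlMr ?mul1r; lra.
  have C0e : C0 <= C0 + e by rewrite lerDl ltW.
  exists C0, (C0 + e); split; rewrite ?lexx ?ltrDl //.
  exact: rho_hat_lt_segment rho0' a0 cert0 (certificateW C0e cert0) lt0 lte.
- rewrite lt_min => /andP[/margin0 lt0 lt1].
  exact: rho_hat_lt_segment rho0' a0 cert0 (certificate_rho_1 k rho01) lt0
    (add_margin_lt a0 kk0 lt1).
- rewrite lt_min => /andP[/margin0 lt0 lt1].
  exact: rho_hat_lt_segment rho0' a0 cert0 (certificate_p_star k rho01) lt0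
    (add_margin_lt a0 kk0 lt1).
Qed.
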